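(* Let $p,q\ge 0$ with $p+q=1$ and $p\neq\frac12$. Let $\lambda$ be a continuous (atomless) Borel probability measure on $[0,1]$ whose distribution function $g_\lambda(x)=\lambda([0,x))$ is differentiable on $[0,1]$. Define $f(x)=2px+2q(1-x)$ and $G(x)=x\bigl(x+2q(1-x)\bigr)$, and set $g^{(1)}_\lambda=g_\lambda$ and $g^{(i)}_\lambda=G\circ g^{(i-1)}_\lambda$ for $i\ge 2$. For $n\in\mathbb{N}$ let $f^{(n)}_\lambda(x)=\prod_{i=1}^n f\bigl(g^{(i)}_\lambda(x)\bigr)$, $x\in[0,1]$. Then for every $n\in\mathbb{N}$ the function $f^{(n)}_\lambda:[0,1]\to\mathbb{R}_+$ is increasing if $p>\frac12$ and decreasing if $p<\frac12$.
   Context: The functions $f^{(n)}_\lambda$ are the Radon–Nikodym densities $d(V^n\lambda)/d\lambda$ of the iterates of the quadratic stochastic operator $(V\lambda)(A)=\int\int P(x,y,A)\,d\lambda(x)d\lambda(y)$, where for $x<y$, $P(x,y,\cdot)=q\delta_x+p\delta_y$, $P(y,x,\cdot)=P(x,y,\cdot)$ and $P(x,x,\cdot)=\delta_x$; only the explicit formulas above are needed. *)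

From HB Require Import structures.
From mathcomp Require Import all_boot all_order all_algebra.
From mathcomp Require Import all_classical all_reals all_analysis.
Set Implicit Arguments. Unset Strict Implicit. Unset Printing Implicit Defensive.
Import Order.TTheory GRing.Theory Num.Theory.
Import numFieldNormedType.Exports.
Local Open Scope classical_set_scope.
Local Open Scope ring_scope.

Section Defs.
Variable R : realType.

Definition distr_fun (mu : set R -> \bar R) (x : R) : R :=
  fine (mu [set` `[0, x[]).

Definition fQ (p q x : R) : R := 2 * p * x + 2 * q * (1 - x).

Definition GQ (q x : R) : R := x * (x + 2 * q * (1 - x)).

Definition g_iter (q : R) (g : R -> R) (i : nat) (x : R) : R :=
  iter i.-1 (GQ q) (g x).

Definition f_dens (p q : R) (g : R -> R) (n : nat) (x : R) : R :=
  \prod_(1 <= i < n.+1) fQ p q (g_iter q g i x).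

Definition differentiable_on01 (h : R -> R) : Prop :=
  forall x : R, x \in `[0, 1] ->
    cvg ((fun y => (h y - h x) / (y - x)) @
         within (fun y : R => y \in `[0, 1] /\ y != x) (nbhs x)).

End Defs.

From HB Require Import structures.
From mathcomp Require Import all_boot all_order all_algebra.
From mathcomp Require Import all_classical all_reals all_analysis.
From mathcomp Require Import ring lra.
Import Order.TTheory GRing.Theory Num.Theory.
Import numFieldNormedType.Exports.
Local Open Scope classical_set_scope.
Local Open Scope ring_scope.

(* Each factor of f^(n) is the affine map f(a) = 2q + 2(p - q) a evaluated at
   g^(i)(x). The distribution function is nondecreasing with values in [0,1],
   and G maps [0,1] monotonically into itself, so every g^(i) is nondecreasing
   with values in [0,1]. Hence every factor is nonnegative and moves with x in
   the direction of the sign of p - q = 2p - 1, and so does their product. *)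

Lemma iter_in_homo {d : Order.disp_t} {T : porderType d} {S : {pred T}}
    {f : T -> T} (k : nat) :
  {homo f : x / x \in S} -> {in S &, {homo f : x y / (x <= y)%O}} ->
  {in S &, {homo iter k f : x y / (x <= y)%O}}.
Proof.
move=> fS fhomo x y xS yS; elim: k => //= k IHk xy.
by apply: fhomo; [exact: iter_in|exact: iter_in|exact: IHk].
Qed.

Section DistributionFunction.
Variables (R : realType) (mu : probability R R).

Lemma probability_fin_num (A : set R) : measurable A -> mu A \is a fin_num.
Proof.
move=> mA; rewrite ge0_fin_numE ?measure_ge0 //.
by apply: le_lt_trans (probability_le1 mu mA) _; rewrite ltry.
Qed.

Lemma distr_fun_in01 (x : R) : distr_fun mu x \in `[0, 1].
Proof.
rewrite in_itv /= /distr_fun fine_ge0 ?measure_ge0 //=.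
by rewrite -lee_fin fineK ?probability_fin_num ?probability_le1.
Qed.

Lemma distr_fun_nondecreasing : {homo distr_fun mu : x y / x <= y}.
Proof.
move=> x y xy; apply: fine_le; rewrite ?probability_fin_num //.
by apply: le_measure; rewrite ?inE //; apply: subset_itv; rewrite ?bnd_simp.
Qed.

End DistributionFunction.

Section QuadraticMap.
Variables (R : realType) (q : R).
Hypothesis q01 : q \in `[0, 1].

Lemma GQ_in01 : {homo GQ q : a / a \in `[0, 1]}.
Proof.
move=> a; move: q01; rewrite !in_itv /GQ => /= /andP[? ?] /andP[? ?].
have h1 : 0 <= (1 - a) * (1 + a - 2 * q * a) by apply: mulr_ge0; nra.
have h2 : 0 <= a * (a + 2 * q * (1 - a)) by apply: mulr_ge0; nra.
by apply/andP; split; nra.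
Qed.

Lemma GQ_homo01 : {in `[0, 1] &, {homo GQ q : a b / a <= b}}.
Proof.
move=> a b; move: q01; rewrite !in_itv /GQ => /= /andP[? ?] /andP[? ?] /andP[? ?] ab.
(* G(b) - G(a) = (b - a) ((1 - q)(a + b) + q (2 - a - b)) *)
have h1 : 0 <= (b - a) * ((1 - q) * (a + b)) by apply: mulr_ge0; nra.
have h2 : 0 <= (b - a) * (q * (2 - a - b)) by apply: mulr_ge0; nra.
by nra.
Qed.

Lemma g_iter_in01 (g : R -> R) (i : nat) (x : R) :
  g x \in `[0, 1] -> g_iter q g i x \in `[0, 1].
Proof. exact: (iter_in i.-1 GQ_in01). Qed.

Lemma g_iter_nondecreasing (g : R -> R) (i : nat) :
  (forall x, g x \in `[0, 1]) -> {homo g : x y / x <= y} ->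
  {homo g_iter q g i : x y / x <= y}.
Proof.
move=> g01 ghomo x y xy; rewrite /g_iter.
exact: (iter_in_homo i.-1 GQ_in01 GQ_homo01 _ _ (g01 x) (g01 y) (ghomo _ _ xy)).
Qed.

End QuadraticMap.

Section AffineFactor.
Variables (R : realType) (p q : R).

Lemma fQ_ge0 (a : R) : 0 <= p -> 0 <= q -> a \in `[0, 1] -> 0 <= fQ p q a.
Proof.
rewrite in_itv /fQ => p0 q0 /andP[a0 a1].
rewrite -mulrA -(mulrA 2 q) -mulrDr mulr_ge0 // addr_ge0 ?mulr_ge0 //.
by rewrite subr_ge0.
Qed.

Lemma fQB (a b : R) : fQ p q b - fQ p q a = 2 * (p - q) * (b - a).
Proof. by rewrite /fQ; ring. Qed.

Lemma fQ_nondecreasing : q <= p -> {homo fQ p q : a b / a <= b}.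
Proof.
move=> qp a b ab; rewrite -subr_ge0 fQB.
by rewrite !mulr_ge0 ?subr_ge0.
Qed.

Lemma fQ_nonincreasing : p <= q -> {homo fQ p q : a b /~ a <= b}.
Proof.
move=> pq a b ab; rewrite -subr_ge0 -opprB fQB -mulNr -mulrN opprB.
by rewrite !mulr_ge0 ?subr_ge0.
Qed.

End AffineFactor.

Section Density.
Variables (R : realType) (p q : R) (g : R -> R).
Hypotheses (p0 : 0 <= p) (q0 : 0 <= q) (pq1 : p + q = 1).
Hypotheses (g01 : forall x, g x \in `[0, 1]) (ghomo : {homo g : x y / x <= y}).

Let q01 : q \in `[0, 1]. Proof. by rewrite in_itv /= q0 -pq1 lerDr. Qed.

Let fQ_g_iter_ge0 (i : nat) (x : R) : 0 <= fQ p q (g_iter q g i x).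
Proof. exact/fQ_ge0/g_iter_in01. Qed.

Lemma f_dens_ge0 (n : nat) (x : R) : 0 <= f_dens p q g n x.
Proof. by apply: prodr_ge0 => i _. Qed.

Lemma f_dens_nondecreasing (n : nat) :
  q <= p -> {homo f_dens p q g n : x y / x <= y}.
Proof.
move=> qp x y xy; apply: ler_prod => i _; rewrite fQ_g_iter_ge0 /=.
exact/fQ_nondecreasing/g_iter_nondecreasing.
Qed.

Lemma f_dens_nonincreasing (n : nat) :
  p <= q -> {homo f_dens p q g n : x y /~ x <= y}.
Proof.
move=> pq x y xy; apply: ler_prod => i _; rewrite fQ_g_iter_ge0 /=.
exact/fQ_nonincreasing/g_iter_nondecreasing.
Qed.

End Density.

Theorem proposition4p1 (R : realType) (p q : R)
  (mu : probability R R)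
  (hp : 0 <= p) (hq : 0 <= q) (hpq : p + q = 1) (hp12 : p != 2^-1)
  (hsupp : mu (~` [set` `[0, 1]]) = 0%E)
  (hatomless : forall x : R, mu [set x] = 0%E)
  (hdiff : differentiable_on01 (distr_fun mu)) :
  forall n : nat, (0 < n)%N ->
    (forall x, x \in `[0, 1] -> 0 <= f_dens p q (distr_fun mu) n x) /\
    (2^-1 < p -> forall x y, x \in `[0, 1] -> y \in `[0, 1] -> x <= y ->
        f_dens p q (distr_fun mu) n x <= f_dens p q (distr_fun mu) n y) /\
    (p < 2^-1 -> forall x y, x \in `[0, 1] -> y \in `[0, 1] -> x <= y ->
        f_dens p q (distr_fun mu) n y <= f_dens p q (distr_fun mu) n x).
Proof.
move=> n _.
have g01 := @distr_fun_in01 R mu; have ghomo := @distr_fun_nondecreasing R mu.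
split; [|split].
- by move=> x _; exact: f_dens_ge0.
- move=> p_gt x y _ _; have qp : q <= p by lra.
  exact: f_dens_nondecreasing.
- move=> p_lt x y _ _; have pq : p <= q by lra.
  exact: f_dens_nonincreasing.
Qed.
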